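(* For $p>2$, the function $L_\alpha$ is strictly convex on $[z_p,1)$.
   Context: $p=\alpha(\alpha+1)$, $\alpha>0$; $L_\alpha$ is the solution on $(-1,1)$ of $(1-x^2)y''-2xy'+py=0$ bounded near $1$ with $L_\alpha(1)=1$, and $z_p$ is its largest zero in $(-1,1)$. *)

From Stdlib Require Import Reals Lra.
Open Scope R_scope.

Definition legendre_p (alpha : R) : R := alpha * (alpha + 1).

Definition solves_legendre (p : R) (f : R -> R) : Prop :=
  exists f1 f2 : R -> R,
    forall x, -1 < x < 1 ->
      derivable_pt_lim f x (f1 x) /\
      derivable_pt_lim f1 x (f2 x) /\
      (1 - x ^ 2) * f2 x - 2 * x * f1 x + p * f x = 0.

Definition bounded_near_1 (f : R -> R) : Prop :=
  exists M delta, 0 < delta /\ forall x, 1 - delta < x < 1 -> Rabs (f x) <= M.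

(* L(1) = 1, understood as the (left) limit of f at 1 being 1 *)
Definition value_at_1 (f : R -> R) (v : R) : Prop :=
  forall eps, 0 < eps -> exists delta, 0 < delta /\
    forall x, 1 - delta < x < 1 -> Rabs (f x - v) < eps.

Definition is_L (alpha : R) (f : R -> R) : Prop :=
  solves_legendre (legendre_p alpha) f /\ bounded_near_1 f /\ value_at_1 f 1.

Definition largest_zero (f : R -> R) (z : R) : Prop :=
  -1 < z < 1 /\ f z = 0 /\ forall x, z < x < 1 -> f x <> 0.

Definition strictly_convex_on_Ico (f : R -> R) (a b : R) : Prop :=
  forall x y t, a <= x -> x < y -> y < b -> 0 < t < 1 ->
    f (t * x + (1 - t) * y) < t * f x + (1 - t) * f y.

(* Put flux := (1 - x^2) L' and curv := (1 - x^2)(2 x L' - p L), which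
   equals (1 - x^2)^2 L'' by the equation.  The equation gives flux' = - p L
   and curv' = (2 - p)(1 - x^2) L'.  On (z_p, 1) we have L > 0, so flux
   decreases; a negative value c of flux would force L' <= c / (2 (1 - x)) and
   hence L -> -oo logarithmically at 1, contradicting boundedness.  So flux > 0,
   L' > 0, and curv decreases for p > 2; since curv >= - p (1 - x^2) L -> 0 at
   1, curv > 0.  Thus L'' > 0 on (z_p, 1), L' increases on [z_p, 1) and L is
   strictly convex there. *)

From Stdlib Require Import Reals Ranalysis5 Lra Psatz.
Open Scope R_scope.

Lemma derive_pos_increasing (h h' : R -> R) x y :
  x < y ->
  (forall c, x <= c <= y -> derivable_pt_lim h c (h' c)) ->
  (forall c, x < c < y -> 0 < h' c) ->
  h x < h y.
Proof.
  intros Hxy Dh Hpos.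
  destruct (MVT_cor2 h h' x y Hxy Dh) as [c [E Hc]].
  specialize (Hpos c Hc). nra.
Qed.

Lemma derive_neg_decreasing (h h' : R -> R) x y :
  x < y ->
  (forall c, x <= c <= y -> derivable_pt_lim h c (h' c)) ->
  (forall c, x < c < y -> h' c < 0) ->
  h y < h x.
Proof.
  intros Hxy Dh Hneg.
  destruct (MVT_cor2 h h' x y Hxy Dh) as [c [E Hc]].
  specialize (Hneg c Hc). nra.
Qed.

Lemma strictly_convex_of_deriv_increasing (f f' : R -> R) a b :
  (forall x, a <= x < b -> derivable_pt_lim f x (f' x)) ->
  (forall x y, a <= x -> x < y -> y < b -> f' x < f' y) ->
  strictly_convex_on_Ico f a b.
Proof.
  intros Df Hinc x y t Hax Hxy Hyb Ht.
  set (w := t * x + (1 - t) * y).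
  assert (Hw : x < w < y) by (unfold w; nra).
  destruct (MVT_cor2 f f' x w) as [c1 [E1 Hc1]];
    [lra | intros c Hc; apply Df; lra |].
  destruct (MVT_cor2 f f' w y) as [c2 [E2 Hc2]];
    [lra | intros c Hc; apply Df; lra |].
  assert (Hc12 : f' c1 < f' c2) by (apply Hinc; lra).
  assert (Hgap : t * f x + (1 - t) * f y - f w
                 = t * (1 - t) * (y - x) * (f' c2 - f' c1)).
  { replace (f x) with (f w - f' c1 * (w - x)) by lra.
    replace (f y) with (f w + f' c2 * (y - w)) by lra.
    unfold w. ring. }
  assert (0 < t * (1 - t) * (y - x) * (f' c2 - f' c1))
    by (repeat apply Rmult_lt_0_compat; lra).
  lra.
Qed.

Lemma exists_between_near_1 a d :
  a < 1 -> 0 < d -> exists y, a < y < 1 /\ 1 - d < y.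
Proof.
  intros Ha Hd. exists ((Rmax a (1 - d) + 1) / 2).
  pose proof (Rmax_l a (1 - d)). pose proof (Rmax_r a (1 - d)).
  assert (Rmax a (1 - d) < 1) by (apply Rmax_lub_lt; lra).
  lra.
Qed.

Lemma pos_of_zero_free_left_of_1 (f : R -> R) a v :
  0 < v -> value_at_1 f v ->
  (forall x, a < x < 1 -> continuity_pt f x) ->
  (forall x, a < x < 1 -> f x <> 0) ->
  forall x, a < x < 1 -> 0 < f x.
Proof.
  intros Hv Hlim Hcont Hnz x Hx.
  destruct (Rtotal_order (f x) 0) as [Hneg | [Hzero | Hpos]];
    [| exfalso; exact (Hnz x Hx Hzero) | exact Hpos].
  exfalso.
  destruct (Hlim v Hv) as [d [Hd Hnear]].
  destruct (exists_between_near_1 x d) as [y [Hy Hyd]]; [lra | exact Hd |].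
  assert (Hfy : 0 < f y)
    by (pose proof (Hnear y ltac:(lra)) as Q; apply Rabs_def2 in Q; lra).
  destruct (IVT_interv f x y) as [w [Hw Hfw]]; try lra.
  - intros c Hc. apply Hcont. lra.
  - exact (Hnz w ltac:(lra) Hfw).
Qed.

Lemma ln_one_minus_unbounded a K :
  a < 1 -> exists x, a < x < 1 /\ K < - ln (1 - x).
Proof.
  intros Ha.
  pose proof (exp_pos (- K)).
  set (e := Rmin ((1 - a) / 2) (exp (- K) / 2)).
  assert (He : 0 < e) by (apply Rmin_pos; lra).
  assert (He_le : e <= (1 - a) / 2) by apply Rmin_l.
  assert (He_lt : e < exp (- K))
    by (assert (e <= exp (- K) / 2) by apply Rmin_r; lra).
  exists (1 - e). split; [lra |].
  replace (1 - (1 - e)) with e by ring.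
  assert (ln e < - K); [| lra].
  rewrite <- (ln_exp (- K)). apply ln_increasing; lra.
Qed.

Lemma derivable_pt_lim_add_ln_one_minus (f f' : R -> R) c x :
  x < 1 -> derivable_pt_lim f x (f' x) ->
  derivable_pt_lim (fun y => f y + c / 2 * ln (1 - y)) x
    (f' x - c / (2 * (1 - x))).
Proof.
  intros Hx Df.
  assert (D1 : derivable_pt_lim (fun y => 1 - y) x (0 - 1))
    by exact (derivable_pt_lim_minus _ _ x _ _ (derivable_pt_lim_const 1 x)
                (derivable_pt_lim_id x)).
  pose proof (derivable_pt_lim_comp _ ln x _ _ D1
                (derivable_pt_lim_ln (1 - x) ltac:(lra))) as Dln.
  pose proof (derivable_pt_lim_plus _ _ x _ _ Df
                (derivable_pt_lim_scal _ (c / 2) x _ Dln)) as D.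
  replace (f' x - c / (2 * (1 - x)))
    with (f' x + c / 2 * (/ (1 - x) * (0 - 1))) by (field; lra).
  exact D.
Qed.

(* If the flux (1 - x^2) f' decreases and took a value c < 0, then
   f + c/2 ln (1 - x) would decrease, so f would tend to -oo at 1. *)
Lemma flux_nonneg_of_bounded (f f' : R -> R) a :
  -1 <= a ->
  (forall x, a < x < 1 -> derivable_pt_lim f x (f' x)) ->
  (forall x y, a < x -> x < y -> y < 1 ->
     (1 - y ^ 2) * f' y < (1 - x ^ 2) * f' x) ->
  bounded_near_1 f ->
  forall x, a < x < 1 -> 0 <= (1 - x ^ 2) * f' x.
Proof.
  intros Ha Df Hdec [M [d [Hd HM]]] x0 Hx0.
  apply Rnot_lt_le. intros Hc.
  set (c := (1 - x0 ^ 2) * f' x0) in *.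
  set (h := fun y => f y + c / 2 * ln (1 - y)).
  assert (Hh : forall x, x0 < x < 1 -> h x < h x0).
  { intros x Hx.
    apply (derive_neg_decreasing h (fun y => f' y - c / (2 * (1 - y)))); [lra | |].
    - intros y Hy. apply derivable_pt_lim_add_ln_one_minus; [lra |]. apply Df. lra.
    - intros y Hy. cbv beta.
      assert (Hflux : (1 - y ^ 2) * f' y < c) by (apply Hdec; lra).
      assert (Hbound : 2 * (1 - y) * f' y < c) by nra.
      assert (c / (2 * (1 - y)) * (2 * (1 - y)) = c) by (field; lra).
      nra. }
  assert (Hmax : Rmax x0 (1 - d) < 1) by (apply Rmax_lub_lt; lra).
  set (K := 2 * (h x0 + M) / - c).
  destruct (ln_one_minus_unbounded _ K Hmax) as [x [Hx HK]].
  pose proof (Rmax_l x0 (1 - d)). pose proof (Rmax_r x0 (1 - d)).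
  assert (Hfx : - M <= f x)
    by (pose proof (HM x ltac:(lra)); pose proof (Rle_abs (- f x));
        rewrite Rabs_Ropp in *; lra).
  pose proof (Hh x ltac:(lra)) as Hhx. unfold h in Hhx at 1.
  assert (- c / 2 * K = h x0 + M) by (unfold K; field; lra).
  clearbody K h c. nra.
Qed.

Lemma nonneg_of_decreasing_to_nonneg (h : R -> R) a :
  (forall x y, a < x -> x < y -> y < 1 -> h y < h x) ->
  (forall eps b, 0 < eps -> b < 1 -> exists y, b < y < 1 /\ - eps < h y) ->
  forall x, a < x < 1 -> 0 <= h x.
Proof.
  intros Hdec Hnear x Hx.
  apply Rnot_lt_le. intros Hneg.
  destruct (Hnear (- h x) x ltac:(lra) ltac:(lra)) as [y [Hy Hhy]].
  pose proof (Hdec x y ltac:(lra) ltac:(lra) ltac:(lra)). lra.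
Qed.

Lemma pos_of_decreasing_nonneg (h : R -> R) a :
  (forall x y, a < x -> x < y -> y < 1 -> h y < h x) ->
  (forall x, a < x < 1 -> 0 <= h x) ->
  forall x, a < x < 1 -> 0 < h x.
Proof.
  intros Hdec Hnn x Hx.
  pose proof (Hdec x ((x + 1) / 2) ltac:(lra) ltac:(lra) ltac:(lra)).
  pose proof (Hnn ((x + 1) / 2) ltac:(lra)). lra.
Qed.

Lemma derivable_pt_lim_one_minus_sqr x :
  derivable_pt_lim (fun y => 1 - y ^ 2) x (- 2 * x).
Proof.
  replace (- 2 * x) with (0 - INR 2 * x ^ (2 - 1)) by (simpl; ring).
  exact (derivable_pt_lim_minus _ _ x _ _ (derivable_pt_lim_const 1 x)
           (derivable_pt_lim_pow x 2)).
Qed.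

Section Legendre.

Variables (p : R) (f f' f'' : R -> R).
Hypothesis f_deriv : forall x, -1 < x < 1 -> derivable_pt_lim f x (f' x).
Hypothesis f'_deriv : forall x, -1 < x < 1 -> derivable_pt_lim f' x (f'' x).
Hypothesis legendre_eq : forall x, -1 < x < 1 ->
  (1 - x ^ 2) * f'' x - 2 * x * f' x + p * f x = 0.

Let flux y := (1 - y ^ 2) * f' y.

(* [curv y = (1 - y^2)^2 f'' y] on (-1, 1), written without f'' so that it
   can be differentiated. *)
Let curv y := (1 - y ^ 2) * (2 * y * f' y - p * f y).

Lemma flux_deriv x : -1 < x < 1 -> derivable_pt_lim flux x (- p * f x).
Proof.
  intros Hx.
  pose proof (derivable_pt_lim_mult _ _ x _ _ (derivable_pt_lim_one_minus_sqr x)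
                (f'_deriv x Hx)) as D.
  replace (- p * f x) with (- 2 * x * f' x + (1 - x ^ 2) * f'' x)
    by (pose proof (legendre_eq x Hx); lra).
  exact D.
Qed.

Lemma curv_deriv x :
  -1 < x < 1 -> derivable_pt_lim curv x ((2 - p) * (1 - x ^ 2) * f' x).
Proof.
  intros Hx.
  assert (D2x : derivable_pt_lim (fun y => 2 * y) x 2).
  { pose proof (derivable_pt_lim_scal id 2 x 1 (derivable_pt_lim_id x)) as D.
    rewrite Rmult_1_r in D. exact D. }
  pose proof (derivable_pt_lim_minus _ _ x _ _
                (derivable_pt_lim_mult _ _ x _ _ D2x (f'_deriv x Hx))
                (derivable_pt_lim_scal f p x _ (f_deriv x Hx))) as Dinner.
  pose proof (derivable_pt_lim_mult _ _ x _ _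
                (derivable_pt_lim_one_minus_sqr x) Dinner) as D.
  replace ((2 - p) * (1 - x ^ 2) * f' x) with
    (- 2 * x * (2 * x * f' x - p * f x) +
     (1 - x ^ 2) * (2 * f' x + 2 * x * f'' x - p * f' x)).
  - exact D.
  - pose proof (legendre_eq x Hx).
    replace (2 * x * f' x - p * f x) with ((1 - x ^ 2) * f'' x) by lra.
    ring.
Qed.

Hypothesis p_gt_2 : 2 < p.
Variable z : R.
Hypothesis z_range : -1 < z < 1.
Hypothesis f_pos : forall x, z < x < 1 -> 0 < f x.
Hypothesis f_bounded : bounded_near_1 f.

Lemma flux_decreasing x y : z < x -> x < y -> y < 1 -> flux y < flux x.
Proof.
  intros Hzx Hxy Hy1.
  apply (derive_neg_decreasing flux (fun c => - p * f c)); [lra | |].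
  - intros c Hc. apply flux_deriv. lra.
  - intros c Hc. pose proof (f_pos c ltac:(lra)). nra.
Qed.

Lemma flux_pos x : z < x < 1 -> 0 < flux x.
Proof.
  apply (pos_of_decreasing_nonneg flux z flux_decreasing).
  apply (flux_nonneg_of_bounded f f' z); [lra | | exact flux_decreasing | exact f_bounded].
  intros y Hy. apply f_deriv. lra.
Qed.

Lemma deriv_pos x : z < x < 1 -> 0 < f' x.
Proof.
  intros Hx. pose proof (flux_pos x Hx). unfold flux in *.
  assert (0 < 1 - x ^ 2) by nra. nra.
Qed.

Lemma curv_decreasing x y : z < x -> x < y -> y < 1 -> curv y < curv x.
Proof.
  intros Hzx Hxy Hy1.
  apply (derive_neg_decreasing curv (fun c => (2 - p) * (1 - c ^ 2) * f' c));
    [lra | |].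
  - intros c Hc. apply curv_deriv. lra.
  - intros c Hc. pose proof (deriv_pos c ltac:(lra)).
    assert (0 < 1 - c ^ 2) by nra.
    assert (0 < (p - 2) * (1 - c ^ 2) * f' c)
      by (repeat apply Rmult_lt_0_compat; lra).
    lra.
Qed.

(* [curv y = 2 y flux y - p (1 - y^2) f y >= - 2 p M (1 - y)] near 1. *)
Lemma curv_nonneg x : z < x < 1 -> 0 <= curv x.
Proof.
  apply (nonneg_of_decreasing_to_nonneg curv z curv_decreasing).
  intros eps b Heps Hb.
  destruct f_bounded as [M [d [Hd HM]]].
  set (M' := Rabs M + 1).
  assert (HM' : 0 < M') by (unfold M'; pose proof (Rabs_pos M); lra).
  assert (Hab : Rmax (Rmax b z) 0 < 1)
    by (repeat apply Rmax_lub_lt; lra).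
  assert (Hd' : 0 < Rmin d (eps / (2 * p * M')))
    by (apply Rmin_pos; [lra | apply Rdiv_lt_0_compat; nra]).
  destruct (exists_between_near_1 _ _ Hab Hd') as [y [Hy Hyd]].
  exists y.
  pose proof (Rmax_l (Rmax b z) 0). pose proof (Rmax_r (Rmax b z) 0).
  pose proof (Rmax_l b z). pose proof (Rmax_r b z).
  pose proof (Rmin_l d (eps / (2 * p * M'))).
  pose proof (Rmin_r d (eps / (2 * p * M'))).
  split; [lra |].
  assert (Hfy : f y <= M')
    by (pose proof (HM y ltac:(lra)); pose proof (Rle_abs (f y));
        pose proof (Rle_abs M); unfold M'; lra).
  assert (Hsmall : 2 * p * M' * (1 - y) < eps).
  { assert (eps / (2 * p * M') * (2 * p * M') = eps) by (field; nra).
    assert (0 < 2 * p * M') by nra. nra. }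
  pose proof (flux_pos y ltac:(lra)).
  assert (Hcurv : curv y = 2 * y * flux y - p * (1 - y ^ 2) * f y)
    by (unfold curv, flux; ring).
  assert (0 <= 2 * y * flux y) by nra.
  assert (p * (1 - y ^ 2) * f y <= 2 * p * M' * (1 - y)).
  { assert ((1 + y) * f y <= 2 * M') by nra.
    assert (p * (1 - y) * ((1 + y) * f y) <= p * (1 - y) * (2 * M'))
      by (apply Rmult_le_compat_l; nra).
    replace (p * (1 - y ^ 2) * f y) with (p * (1 - y) * ((1 + y) * f y)) by ring.
    lra. }
  lra.
Qed.

Lemma second_deriv_pos x : z < x < 1 -> 0 < f'' x.
Proof.
  intros Hx.
  pose proof (pos_of_decreasing_nonneg curv z curv_decreasing curv_nonneg x Hx).
  assert (Hcurv : curv x = (1 - x ^ 2) ^ 2 * f'' x)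
    by (unfold curv; pose proof (legendre_eq x ltac:(lra));
        replace (2 * x * f' x - p * f x) with ((1 - x ^ 2) * f'' x) by lra; ring).
  assert (0 < (1 - x ^ 2) ^ 2) by (apply pow_lt; nra).
  apply (Rmult_lt_reg_l ((1 - x ^ 2) ^ 2)); [assumption |].
  rewrite Rmult_0_r. lra.
Qed.

Lemma deriv_increasing x y : z <= x -> x < y -> y < 1 -> f' x < f' y.
Proof.
  intros Hzx Hxy Hy1.
  apply (derive_pos_increasing f' f''); [lra | |].
  - intros c Hc. apply f'_deriv. lra.
  - intros c Hc. apply second_deriv_pos. lra.
Qed.

End Legendre.

Theorem lemma7p2 (alpha : R) (f : R -> R) (z : R) :
  0 < alpha -> 2 < legendre_p alpha ->
  is_L alpha f -> largest_zero f z ->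
  strictly_convex_on_Ico f z 1.
Proof.
  intros _ Hp [[f' [f'' Hsol]] [Hbounded Hvalue]] [Hz [_ Hzero_free]].
  assert (Df : forall x, -1 < x < 1 -> derivable_pt_lim f x (f' x))
    by (intros x Hx; apply Hsol, Hx).
  assert (Df' : forall x, -1 < x < 1 -> derivable_pt_lim f' x (f'' x))
    by (intros x Hx; apply Hsol, Hx).
  assert (Heq : forall x, -1 < x < 1 ->
            (1 - x ^ 2) * f'' x - 2 * x * f' x + legendre_p alpha * f x = 0)
    by (intros x Hx; apply Hsol, Hx).
  assert (Hpos : forall x, z < x < 1 -> 0 < f x).
  { apply (pos_of_zero_free_left_of_1 f z 1); [lra | exact Hvalue | | exact Hzero_free].
    intros x Hx. apply derivable_continuous_pt. exists (f' x). apply Df. lra. }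
  apply (strictly_convex_of_deriv_increasing f f').
  - intros x Hx. apply Df. lra.
  - exact (deriv_increasing _ f f' f'' Df Df' Heq Hp z Hz Hpos Hbounded).
Qed.
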